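(* Let $p\equiv 5\pmod 6$ be a prime, let $n$ be the multiplicative order of $2$ modulo $p$, and let $e$ be the multiplicative order of $p$ modulo $3n$. Then $e=2$. *)

From mathcomp Require Import all_boot.
Set Implicit Arguments. Unset Strict Implicit. Unset Printing Implicit Defensive.

Definition is_mult_order (a m k : nat) : Prop :=
  [/\ 0 < k, a ^ k = 1 %[mod m]
    & forall j, 0 < j -> a ^ j = 1 %[mod m] -> k <= j].

From mathcomp Require Import all_boot.
From mathcomp Require Import cyclic.

(* By Fermat, n divides p - 1, and p = 2 (mod 3) gives 3 | p + 1, so 3n divides
   p^2 - 1 = (p - 1)(p + 1): the order e of p modulo 3n divides 2.  It is not 1,
   because p = 1 (mod 3n) would force p = 1 (mod 3). *)

Lemma mult_order_dvd a m k x :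
  is_mult_order a m k -> a ^ x = 1 %[mod m] -> k %| x.
Proof.
case=> k_gt0 ak k_min ax; apply/eqP.
have ax_mod : a ^ (x %% k) = 1 %[mod m].
  move: ax; rewrite {1}(divn_eq x k) expnD (mulnC (x %/ k)) expnM.
  by rewrite -modnMml -modnXm ak modnXm exp1n modnMml mul1n.
case: (posnP (x %% k)) => // /k_min /(_ ax_mod).
by rewrite leqNgt ltn_mod k_gt0.
Qed.

Lemma mult_order_prime a m q e :
  prime q -> a ^ q = 1 %[mod m] -> a <> 1 %[mod m] ->
  is_mult_order a m e -> e = q.
Proof.
move=> q_pr aq a_n1 ord_e.
have [e_eq1 | e_neq1] := eqVneq e 1.
  by case: ord_e; rewrite e_eq1 expn1.
apply/(prime_nt_dvdP q_pr e_neq1); exact: mult_order_dvd ord_e aq.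
Qed.

Lemma mult_order_dvd_pred a p n :
  prime p -> coprime a p -> is_mult_order a p n -> n %| p.-1.
Proof.
move=> p_pr co_ap ord_n; apply: mult_order_dvd ord_n _.
by rewrite -(totient_prime p_pr) Euler_exp_totient.
Qed.

Lemma sqrn_eq1_mod m d1 d2 :
  0 < m -> d1 %| m.+1 -> d2 %| m.-1 -> m ^ 2 = 1 %[mod d1 * d2].
Proof.
move=> m_gt0 d1m d2m; apply/eqP.
rewrite eqn_mod_dvd ?expn_gt0 ?m_gt0 // -{2}(exp1n 2) subn_sqr.
by rewrite mulnC subn1 addn1 dvdn_mul.
Qed.

Theorem proposition3p11 (p n e : nat) :
  prime p -> p = 5 %[mod 6] ->
  is_mult_order 2 p n -> is_mult_order p (3 * n) e ->
  e = 2.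
Proof.
move=> p_pr p_mod6 ord_n ord_e.
have p_mod3 : p = 2 %[mod 3] by rewrite -(modn_dvdm p (_ : 3 %| 6)) ?p_mod6.
have p_neq2 : p != 2 by apply: contra_eqN p_mod6 => /eqP ->.
have co_2p : coprime 2 p by rewrite prime_coprime // dvdn_prime2 // eq_sym.
apply: mult_order_prime ord_e => //.
  apply: sqrn_eq1_mod; first exact: prime_gt0.
    by rewrite /dvdn -addn1 -modnDml p_mod3.
  exact: mult_order_dvd_pred ord_n.
move/(congr1 (modn^~ 3)); rewrite !modn_dvdm ?dvdn_mulr //.
by rewrite p_mod3.
Qed.
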